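(* Let $N$ be a natural number, $P=\{a\subseteq N: |a|\geq 2\}$, and let $\|\cdot\|_3$ be the graph coloring norm on subsets of $P$ (defined in the context). Let $E=\{e\subseteq N:|e|=2\}$ and for $A\subseteq P$ let \[\mathcal E_A=\{E'\subseteq E: (\forall e\in E')(\exists p\in A)\, e\subseteq p\ \text{ and }\ (\forall p\in A)(\exists e\in E')\, e\subseteq p\}.\] Then for every $A\subseteq P$, \[\|A\|_3=\min\{\|E'\|_3: E'\in\mathcal E_A\}.\]
   Context: $N=\{0,\ldots,N-1\}$. For $A\subseteq P$ and $z\subseteq N$ let $A\restriction z=\{a\in A: a\subseteq z\}$. The relation ''$\|A\|_3\geq m$'' is defined recursively: $\|A\|_3\geq 0$ always; $\|A\|_3\geq 1$ iff $A\neq\emptyset$; for $m\geq 1$, $\|A\|_3\geq m+1$ iff for every $z\subseteq N$ either $\|A\restriction z\|_3\geq m$ or $\|A\restriction(N\setminus z)\|_3\geq m$. Then $\|A\|_3$ is the largest $m$ with $\|A\|_3\geq m$. *)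

From mathcomp Require Import all_boot.
Set Implicit Arguments. Unset Strict Implicit. Unset Printing Implicit Defensive.

(* Ground set N = {0,...,N-1} is the finite type 'I_N.
   Subsets of N are {set 'I_N}; families of subsets are {set {set 'I_N}}. *)

Definition Pset (N : nat) : {set {set 'I_N}} := [set a : {set 'I_N} | 2 <= #|a|].

Definition Eset (N : nat) : {set {set 'I_N}} := [set e : {set 'I_N} | #|e| == 2].

Definition restr (N : nat) (A : {set {set 'I_N}}) (z : {set 'I_N}) : {set {set 'I_N}} :=
  [set a in A | a \subset z].

(* norm3_ge m A  <->  ||A||_3 >= m, by the recursive definition. *)
Fixpoint norm3_ge (N : nat) (m : nat) (A : {set {set 'I_N}}) {struct m} : bool :=
  match m with
  | 0 => true
  | S m' =>
      match m' with
      | 0 => A != set0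
      | S _ => [forall z : {set 'I_N},
                  norm3_ge m' (restr A z) || norm3_ge m' (restr A (~: z))]
      end
  end.

Definition is_norm3 (N : nat) (A : {set {set 'I_N}}) (k : nat) : Prop :=
  norm3_ge k A /\ (forall m, norm3_ge m A -> m <= k).

Definition calE (N : nat) (A : {set {set 'I_N}}) : {set {set {set 'I_N}}} :=
  [set E' : {set {set 'I_N}} |
     [&& E' \subset Eset N,
         [forall e in E', exists p in A, e \subset p] &
         [forall p in A, exists e in E', e \subset p]]].

From mathcomp Require Import all_boot.
Set Implicit Arguments. Unset Strict Implicit. Unset Printing Implicit Defensive.

(* Call a coloring of N proper for A if no member of A is monochromatic.
   Then ||A||_3 >= m + 1 iff A has no proper coloring with 2^m colors: a
   coloring with 2^(m+1) colors is the same as a splitting z of N together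
   with 2^m-colorings of z and of its complement, and a member of A is
   monochromatic iff it lies in one side and is monochromatic there.  Hence
   ||A||_3 is the least k such that A has a proper 2^k-coloring c.  Every
   E' in calE_A needs at least as many colors as A, since each member of A
   contains a member of E'; conversely the two-element subsets of members of
   A that c does not make monochromatic form an E' in calE_A, properly
   colored by c. *)

Section Coloring.
Variable T : finType.

Definition monochromatic (C : eqType) (c : T -> C) (a : {set T}) : bool :=
  [forall x in a, forall y in a, c x == c y].

Definition colorable (A : {set {set T}}) (n : nat) : bool :=
  [exists c : {ffun T -> 'I_n}, [forall a in A, ~~ monochromatic c a]].

Lemma monochromatic_comp_in (C D : eqType) (c : T -> C) (d : T -> D)
    (f : D -> C) (a : {set T}) :
  injective f -> {in a, forall x, c x = f (d x)} ->
  monochromatic c a = monochromatic d a.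
Proof.
move=> f_inj cE; apply: eq_forallb_in => x xa; apply: eq_forallb_in => y ya.
by rewrite !cE // (inj_eq f_inj).
Qed.

Lemma monochromatic_subset (C : eqType) (c : T -> C) (a b : {set T}) :
  b \subset a -> monochromatic c a -> monochromatic c b.
Proof.
move=> /subsetP ba /forall_inP mono; apply/forall_inP => x /ba xa.
by apply/forall_inP => y /ba ya; move/forall_inP: (mono x xa); apply.
Qed.

Lemma not_monochromatic_pair (C : eqType) (c : T -> C) (a : {set T}) :
  ~~ monochromatic c a ->
  exists2 e : {set T}, e \subset a & (#|e| == 2) && ~~ monochromatic c e.
Proof.
case/forall_inPn => x xa /forall_inPn [y ya cxy].
have xy : x != y by apply: contraNneq cxy => ->.
exists [set x; y]; first by apply/subsetP => w; rewrite !inE => /orP[]/eqP->.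
rewrite cards2 xy /=; apply: contra cxy => /forall_inP/(_ x (set21 _ _)).
by move/forall_inP; apply; apply: set22.
Qed.

Lemma colorable1 (A : {set {set T}}) : colorable A 1 = (A == set0).
Proof.
apply/existsP/eqP => [[c /forall_inP proper_c] | ->].
  apply/setP => a; rewrite inE; apply/negP => aA; move/negP: (proper_c a aA).
  by apply; apply/forall_inP => x _; apply/forall_inP => y _; rewrite !ord1.
by exists [ffun=> ord0]; apply/forall_inP => a; rewrite inE.
Qed.

Lemma colorable_le (A : {set {set T}}) (n n' : nat) :
  n <= n' -> colorable A n -> colorable A n'.
Proof.
move=> le_nn' /existsP[c /forall_inP proper_c]; apply/existsP.
exists [ffun x => widen_ord le_nn' (c x)]; apply/forall_inP => a aA.
rewrite (@monochromatic_comp_in _ _ _ c (widen_ord le_nn')) ?proper_c //.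
  by move=> i j [/val_inj].
by move=> x _; rewrite ffunE.
Qed.

Lemma colorable_card (A : {set {set T}}) :
  {in A, forall a : {set T}, 1 < #|a|} -> colorable A #|T|.
Proof.
move=> A_gt1; apply/existsP; exists [ffun x => enum_rank x].
apply/forall_inP => a aA; have [x [y [xa ya]]] := card_gt1P (A_gt1 a aA).
apply: contra => /forall_inP/(_ x xa)/forall_inP/(_ y ya).
by rewrite !ffunE => /eqP/enum_rank_inj ->.
Qed.

Lemma colorable_refine (A B : {set {set T}}) (n : nat) :
  {in A, forall a : {set T}, exists2 b, b \in B & b \subset a} ->
  colorable B n -> colorable A n.
Proof.
move=> AB /existsP[c /forall_inP proper_c]; apply/existsP; exists c.
apply/forall_inP => a /AB[b bB ba].
by apply: contra (proper_c b bB); apply: monochromatic_subset.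
Qed.

Lemma colorable_add (A : {set {set T}}) (n : nat) :
  colorable A (n + n) =
  [exists z : {set T}, colorable [set a in A | a \subset z] n &&
             colorable [set a in A | a \subset ~: z] n].
Proof.
apply/existsP/existsP => [[c /forall_inP proper_c] | [z]].
  pose d := [ffun x => match split (c x) with inl i | inr i => i end].
  have cE x : c x = if c x < n then lshift n (d x) else rshift n (d x).
    by rewrite ffunE; case: splitP => j /= cj; apply: val_inj.
  exists [set x | c x < n]; apply/andP; split; apply/existsP; exists d;
    apply/forall_inP => a; rewrite inE => /andP[aA /subsetP az].
    rewrite -(@monochromatic_comp_in _ _ c d (lshift n)) ?proper_c //.
      exact: lshift_inj.
    by move=> x /az; rewrite inE => cx; rewrite {1}cE cx.
  rewrite -(@monochromatic_comp_in _ _ c d (@rshift n n)) ?proper_c //.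
    exact: rshift_inj.
  by move=> x /az; rewrite !inE => /negbTE cx; rewrite {1}cE cx.
case/andP => /existsP[c1 /forall_inP proper_c1].
move=> /existsP[c2 /forall_inP proper_c2].
exists [ffun x => if x \in z then lshift n (c1 x) else rshift n (c2 x)].
apply/forall_inP => a aA; have [az | naz] := boolP (a \subset z).
  rewrite (@monochromatic_comp_in _ _ _ c1 (lshift n)) ?proper_c1 ?inE ?aA //.
    exact: lshift_inj.
  by move=> x xa; rewrite ffunE (subsetP az).
have [anz | nanz] := boolP (a \subset ~: z).
  rewrite (@monochromatic_comp_in _ _ _ c2 (@rshift n n)) ?proper_c2 ?inE ?aA//.
    exact: rshift_inj.
  by move=> x /(subsetP anz); rewrite ffunE inE => /negbTE ->.
have [x xa xz] := subsetPn naz; have [y ya yz] := subsetPn nanz.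
rewrite inE negbK in yz.
apply/negP => /forall_inP/(_ y ya)/forall_inP/(_ x xa).
by rewrite !ffunE (negbTE xz) yz eq_lrshift.
Qed.

Definition bichromatic_pairs (C : eqType) (A : {set {set T}}) (c : T -> C) :
    {set {set T}} :=
  [set e : {set T} |
     [&& #|e| == 2, [exists p in A, e \subset p] & ~~ monochromatic c e]].

Lemma colorable_bichromatic_pairs (A : {set {set T}}) (n : nat)
    (c : {ffun T -> 'I_n}) :
  colorable (bichromatic_pairs A c) n.
Proof.
by apply/existsP; exists c; apply/forall_inP => e; rewrite inE => /and3P[].
Qed.

End Coloring.

Lemma norm3_geSS (N m : nat) (A : {set {set 'I_N}}) :
  norm3_ge m.+2 A =
  [forall z, norm3_ge m.+1 (restr A z) || norm3_ge m.+1 (restr A (~: z))].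
Proof. by []. Qed.

Lemma norm3_geSn (N m : nat) (A : {set {set 'I_N}}) :
  norm3_ge m.+1 A = ~~ colorable A (2 ^ m).
Proof.
elim: m A => [|m IH] A; first by rewrite expn0 colorable1.
rewrite expnS mul2n -addnn colorable_add negb_exists norm3_geSS.
by apply: eq_forallb => z; rewrite !IH negb_and.
Qed.

Lemma norm3_ge_le (N m m' : nat) (A : {set {set 'I_N}}) :
  m' <= m -> norm3_ge m A -> norm3_ge m' A.
Proof.
case: m' => [//|m']; case: m => [//|m] le_m'm; rewrite !norm3_geSn.
by apply: contra; apply: colorable_le; apply: leq_pexp2l.
Qed.

Lemma norm3_ge_Pset (N m : nat) (A : {set {set 'I_N}}) :
  A \subset Pset N -> norm3_ge m A -> m <= N.
Proof.
move=> AP Am; rewrite leqNgt; apply/negP => lt_Nm.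
move: (norm3_ge_le lt_Nm Am); rewrite norm3_geSn; apply/negP/negPn.
apply: colorable_le (ltnW (ltn_expl N (ltnSn 1))) _.
rewrite -[X in colorable _ X]card_ord; apply: colorable_card => a.
by move/(subsetP AP); rewrite inE.
Qed.

Lemma is_norm3P (N k : nat) (A : {set {set 'I_N}}) :
  is_norm3 A k <-> norm3_ge k A /\ colorable A (2 ^ k).
Proof.
split=> [[Ak max_k] | [Ak colA]]; split=> //.
  rewrite -[colorable _ _]negbK -norm3_geSn.
  by apply/negP => /max_k; rewrite ltnn.
move=> m Am; rewrite leqNgt; apply/negP => lt_km.
by move: (norm3_ge_le lt_km Am); rewrite norm3_geSn colA.
Qed.

Lemma is_norm3_exists (N : nat) (A : {set {set 'I_N}}) :
  A \subset Pset N -> exists k, is_norm3 A k.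
Proof.
move=> AP; have A0 : exists m, norm3_ge m A by exists 0.
by have [k Ak max_k] := ex_maxnP A0 (fun m => norm3_ge_Pset AP); exists k.
Qed.

Lemma norm3_ge_calE (N m : nat) (A E' : {set {set 'I_N}}) :
  E' \in calE A -> norm3_ge m A -> norm3_ge m E'.
Proof.
rewrite inE => /and3P[_ _ /forall_inP cover]; case: m => [//|m].
rewrite !norm3_geSn; apply: contra; apply: colorable_refine => a aA.
by have /exists_inP[e eE' ea] := cover a aA; exists e.
Qed.

Lemma bichromatic_pairs_calE (N : nat) (C : eqType) (A : {set {set 'I_N}})
    (c : 'I_N -> C) :
  [forall a in A, ~~ monochromatic c a] -> bichromatic_pairs A c \in calE A.
Proof.
move=> /forall_inP proper_c; rewrite inE; apply/and3P; split.
- by apply/subsetP => e; rewrite !inE => /and3P[].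
- by apply/forall_inP => e; rewrite inE => /and3P[].
apply/forall_inP => p pA.
have [e ep /andP[e2 bi_e]] := not_monochromatic_pair (proper_c p pA).
apply/exists_inP; exists e => //; rewrite inE e2 bi_e andbT.
by apply/exists_inP; exists p.
Qed.

Theorem theorem5p26 (N : nat) (A : {set {set 'I_N}}) :
  A \subset Pset N ->
  exists k : nat,
    [/\ is_norm3 A k,
        (exists2 E' : {set {set 'I_N}}, E' \in calE A & is_norm3 E' k) &
        (forall (E' : {set {set 'I_N}}) (k' : nat),
            E' \in calE A -> is_norm3 E' k' -> k <= k')].
Proof.
move=> AP; have [k kA] := is_norm3_exists AP.
have [Ak /existsP[c proper_c]] := (is_norm3P k A).1 kA.
have E'A := bichromatic_pairs_calE proper_c.
exists k; split=> //.
  exists (bichromatic_pairs A c) => //; apply/is_norm3P; split.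
    exact: norm3_ge_calE E'A Ak.
  exact: colorable_bichromatic_pairs.
by move=> E' k' E'A' [_ max_k']; apply/max_k'/(norm3_ge_calE E'A' Ak).
Qed.
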